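(* Fix $\alpha\in[0,1)$. Let $M=(r,q,u)$ and $\tilde M=(\tilde r,\tilde q,\tilde u)$ be floor-randomized, left-continuous mechanisms satisfying DD, and suppose $\tilde M$ dominates $M$. Let $D=\{\theta\in\Theta:\tilde q(\theta)\tilde r(\theta)>q(\theta)r(\theta)\}$. Then $u(\theta)>\tilde u(\theta)$ for every $\theta\in D$.
   Context: Setting. Let $\Theta=[\underline\theta,\overline\theta]$ with $0<\underline\theta<\overline\theta$. Let $c>0$ and let $P:\mathbb R_+\to\mathbb R_+$ be continuous and strictly decreasing with $P(\overline q)=0$ for some $\overline q>0$. Put $V(q)=\int_0^q P(z)\,dz$ and $\mathrm{TS}(\theta,q)=V(q)-c-\theta q$ for $q>0$, $\mathrm{TS}(\theta,0)=0$. Assume (A2): $\mathrm{TS}(\overline\theta,P^{-1}(\overline\theta))>0$. A mechanism is a triple $M=(r,q,u)$ of functions $r:\Theta\to[0,1]$, $q:\Theta\to[0,\overline q]$, $u:\Theta\to\mathbb R$ with $q(\theta)=0$ if and only if $r(\theta)=0$. It is IC if $u(\theta)\ge u(\theta')+(\theta'-\theta)q(\theta')r(\theta')$ for all $\theta,\theta'\in\Theta$, and IR if $u(\theta)\ge 0$ for all $\theta$. (Known fact: $M$ is IC iff $\theta\mapsto q(\theta)r(\theta)$ is nonincreasing and $u(\theta)=u(\overline\theta)+\int_\theta^{\overline\theta}q(z)r(z)\,dz$ for all $\theta$; an IC mechanism is IR iff $u(\overline\theta)\ge0$.) The regulator's surplus at $\theta$ is $\mathrm{RS}_\alpha(\theta,M)=r(\theta)\,\mathrm{TS}(\theta,q(\theta))-(1-\alpha)u(\theta)$.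 An IC and IR mechanism $\tilde M$ dominates an IC and IR mechanism $M$ if $\mathrm{RS}_\alpha(\theta,\tilde M)\ge \mathrm{RS}_\alpha(\theta,M)$ for all $\theta\in\Theta$ with strict inequality for some $\theta$. The quantity floor $\hat q$ is the unique $q>0$ with $V(q)-qP(q)=c$. A mechanism $(r,q,u)$ is floor-randomized if it is IC, IR, $u(\overline\theta)=0$, and $\Theta$ can be partitioned into three pairwise disjoint (possibly empty) intervals $\Theta_1,\Theta_{01},\Theta_0$, with every element of $\Theta_0$ larger than every element of $\Theta_{01}$ and every element of $\Theta_{01}$ larger than every element of $\Theta_1$, such that: $q(\theta)\ge\hat q$ and $r(\theta)=1$ for $\theta\in\Theta_1$; $q(\theta)=\hat q$ and $r(\theta)\in(0,1)$ for $\theta\in\Theta_{01}$; $q(\theta)=r(\theta)=0$ for $\theta\in\Theta_0$. The efficient quantity is $q_e(\theta)=P^{-1}(\theta)$. A mechanism satisfies downward distortion (DD) if $q(\theta)\le q_e(\theta)$ for all $\theta$, with equality at $\theta=\underline\theta$. A mechanism is left continuous if $\theta\mapsto q(\theta)r(\theta)$ is left continuous at every $\theta\in(\underline\theta,\overline\theta]$. *)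

From Stdlib Require Import Reals Lra ClassicalEpsilon.
From Coquelicot Require Import Coquelicot.
Open Scope R_scope.

Definition InTheta (thl thh th : R) : Prop := thl <= th <= thh.

Definition V (P : R -> R) (q : R) : R := RInt P 0 q.

Definition TS (P : R -> R) (c th q : R) : R :=
  if Req_EM_T q 0 then 0 else V P q - c - th * q.

Definition qe (P : R -> R) (th : R) : R :=
  epsilon (inhabits 0) (fun q => 0 <= q /\ P q = th).

Definition is_mechanism (thl thh qbar : R) (r q u : R -> R) : Prop :=
  forall th, InTheta thl thh th ->
    0 <= r th <= 1 /\ 0 <= q th <= qbar /\ (q th = 0 <-> r th = 0).

Definition IC (thl thh : R) (r q u : R -> R) : Prop :=
  forall th th', InTheta thl thh th -> InTheta thl thh th' ->
    u th >= u th' + (th' - th) * q th' * r th'.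

Definition IR (thl thh : R) (u : R -> R) : Prop :=
  forall th, InTheta thl thh th -> u th >= 0.

Definition RS (P : R -> R) (c alpha : R) (r q u : R -> R) (th : R) : R :=
  r th * TS P c th (q th) - (1 - alpha) * u th.

Definition dominates (thl thh qbar : R) (P : R -> R) (c alpha : R)
    (rt qt ut r q u : R -> R) : Prop :=
  is_mechanism thl thh qbar rt qt ut /\ IC thl thh rt qt ut /\ IR thl thh ut /\
  is_mechanism thl thh qbar r q u /\ IC thl thh r q u /\ IR thl thh u /\
  (forall th, InTheta thl thh th -> RS P c alpha rt qt ut th >= RS P c alpha r q u th) /\
  (exists th, InTheta thl thh th /\ RS P c alpha rt qt ut th > RS P c alpha r q u th).

Definition is_interval (I : R -> Prop) : Prop :=
  forall x y z, I x -> I z -> x <= y <= z -> I y.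

Definition floor_randomized (thl thh qbar qhat : R) (r q u : R -> R) : Prop :=
  is_mechanism thl thh qbar r q u /\ IC thl thh r q u /\ IR thl thh u /\ u thh = 0 /\
  exists T1 T01 T0 : R -> Prop,
    is_interval T1 /\ is_interval T01 /\ is_interval T0 /\
    (forall th, T1 th \/ T01 th \/ T0 th <-> InTheta thl thh th) /\
    (forall th, ~ (T1 th /\ T01 th)) /\ (forall th, ~ (T1 th /\ T0 th)) /\
    (forall th, ~ (T01 th /\ T0 th)) /\
    (forall x y, T0 x -> T01 y -> x > y) /\
    (forall x y, T01 x -> T1 y -> x > y) /\
    (forall th, T1 th -> q th >= qhat /\ r th = 1) /\
    (forall th, T01 th -> q th = qhat /\ 0 < r th < 1) /\
    (forall th, T0 th -> q th = 0 /\ r th = 0).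

Definition DD (thl thh : R) (P : R -> R) (q : R -> R) : Prop :=
  (forall th, InTheta thl thh th -> q th <= qe P th) /\ q thl = qe P thl.

Definition left_continuous (thl thh : R) (r q : R -> R) : Prop :=
  forall th, thl < th <= thh ->
    forall eps, eps > 0 -> exists delta, delta > 0 /\
      forall t, thl <= t -> th - delta < t <= th ->
        Rabs (q t * r t - q th * r th) < eps.

From Stdlib Require Import Reals Lra Lia ClassicalEpsilon Classical.
From Coquelicot Require Import Coquelicot.
Open Scope R_scope.

(* Write [x] and [xt] for the expected allocations [q r] of [M] and of the
   dominating mechanism, and [d = ut - u] for the utility gap.  Incentive
   compatibility of both mechanisms gives
     d s - d t >= (t - s) (xt t - x s)          for all s, t,
   and for a floor-randomized mechanism below the efficient quantity the
   surplus is a nondecreasing function of the expected allocation.  Hence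
   dominance forces d <= 0 wherever xt <= x, and at the lowest type.  If d
   became positive somewhere, then past the last point where d <= 0 we would
   have x <= xt, so d would be nonincreasing there by the inequality above,
   while d rises at rate at most qbar: impossible, so d <= 0 everywhere.
   Finally, at a type th > thl with xt th > x th, left continuity of x gives
   a slightly lower type t with x t < xt th, and the inequality gives
   d th < d t <= 0.  At th = thl the assumption pins the floor at the lowest
   type, so both mechanisms are null above thl and only d thl < 0 can make
   the domination strict. *)

Section Decrement.

Variables (d x : R -> R) (a b : R).

Hypothesis decrement :
  forall s t, a <= s -> s < t -> t <= b -> d s - d t >= (t - s) * (x t - x s).

Lemma decrement_telescope h k :
  0 < h -> a + INR k * h <= b ->
  d a - d (a + INR k * h) >= h * (x (a + INR k * h) - x a).
Proof.
  intros Hh. induction k as [|k IH]; intros Hk.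
  - replace (a + INR 0 * h) with a by (simpl; ring). lra.
  - rewrite S_INR in *. assert (0 <= INR k) by apply pos_INR.
    specialize (IH ltac:(nra)).
    pose proof (decrement (a + INR k * h) (a + (INR k + 1) * h)
                  ltac:(nra) ltac:(nra) Hk) as Hstep.
    replace (a + (INR k + 1) * h - (a + INR k * h)) with h in Hstep by ring.
    nra.
Qed.

Lemma endpoint_le_of_decrement_bound K :
  a < b -> (forall t, a <= t <= b -> 0 <= x t <= K) -> d b <= d a.
Proof.
  intros Hab HxK.
  destruct (Rle_or_lt (d b) (d a)) as [|Hlt]; [assumption|exfalso].
  assert (HK : 0 <= K) by (destruct (HxK a ltac:(lra)); lra).
  destruct (INR_archimed (d b - d a) ((b - a) * K)) as [N HN]; [lra|].
  assert (HN0 : 0 < INR N).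
  { destruct N; [simpl in HN; nra | apply lt_0_INR; lia]. }
  set (h := (b - a) / INR N).
  assert (Hh : 0 < h) by (unfold h; apply Rdiv_lt_0_compat; lra).
  assert (HNh : INR N * h = b - a) by (unfold h; field; lra).
  pose proof (decrement_telescope h N Hh ltac:(lra)) as Htel.
  rewrite HNh in Htel. replace (a + (b - a)) with b in Htel by ring.
  destruct (HxK a ltac:(lra)), (HxK b ltac:(lra)).
  assert (d b - d a <= h * K) by nra.
  assert (INR N * (d b - d a) <= INR N * (h * K)) by (apply Rmult_le_compat_l; lra).
  nra.
Qed.

End Decrement.

(* Real induction: take the supremum [z] of the points where [d <= 0]; just
   above [z] the second hypothesis pulls [d t1] down to a value of [d] that
   the first hypothesis keeps within [2 eta K] of a nonpositive one. *)
Lemma real_induction_nonpos (d : R -> R) (l t1 K : R) :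
  l <= t1 -> 0 < K -> d l <= 0 ->
  (forall w a, l <= w -> w <= a -> a <= t1 -> d a <= d w + (a - w) * K) ->
  (forall a, l <= a -> a < t1 -> (forall t, a < t <= t1 -> 0 < d t) -> d t1 <= d a) ->
  d t1 <= 0.
Proof.
  intros Hl HK Hdl Hrise Hdecr.
  apply Rnot_lt_le; intros Hd1.
  set (E := fun t => l <= t <= t1 /\ d t <= 0).
  destruct (completeness E) as [z [Hub Hlub]].
  { exists t1. intros t [Ht _]. lra. }
  { exists l. split; [lra|assumption]. }
  assert (Hz1 : z <= t1) by (apply Hlub; intros t [Ht _]; lra).
  set (eta := d t1 / (4 * K)).
  assert (Heta : 0 < eta) by (unfold eta; apply Rdiv_lt_0_compat; lra).
  assert (HetaK : eta * K = d t1 / 4) by (unfold eta; field; lra).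
  assert (Hw : exists w, E w /\ z - eta < w).
  { apply NNPP; intros Hn. assert (z <= z - eta); [|lra].
    apply Hlub. intros t Et. apply Rnot_lt_le. intros Hlt. apply Hn. exists t; auto. }
  destruct Hw as [w [[Hw Hdw] Hzw]].
  assert (Hwz : w <= z) by (apply Hub; split; auto).
  set (a := Rmin (z + eta) t1).
  assert (Ha1 : a <= t1) by apply Rmin_r.
  assert (Ha2 : a <= z + eta) by apply Rmin_l.
  assert (Hda : d t1 <= d a).
  { destruct (Rle_lt_or_eq_dec a t1 Ha1) as [Ha|Ha]; [|rewrite Ha; lra].
    assert (Hza : z < a).
    { unfold a in *. destruct (Rle_dec (z + eta) t1).
      - rewrite Rmin_left in * by lra. lra.
      - rewrite Rmin_right in * by lra. lra. }
    apply Hdecr; [lra|lra|]. intros t Ht.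
    apply Rnot_le_lt; intros Hle.
    assert (t <= z) by (apply Hub; split; [lra|assumption]). lra. }
  assert (Hwa : w <= a) by (unfold a; apply Rmin_glb; lra).
  pose proof (Hrise w a (proj1 Hw) Hwa Ha1).
  assert ((a - w) * K <= (2 * eta) * K) by (apply Rmult_le_compat_r; lra).
  lra.
Qed.

Lemma TS_nonzero P c th q : q <> 0 -> TS P c th q = V P q - c - th * q.
Proof. intros H; unfold TS; destruct (Req_EM_T q 0); [contradiction|reflexivity]. Qed.

Lemma TS_zero P c th : TS P c th 0 = 0.
Proof. unfold TS; destruct (Req_EM_T 0 0); [reflexivity|contradiction]. Qed.

Lemma TS_at_floor P c qhat th :
  0 < qhat -> V P qhat - qhat * P qhat = c -> TS P c th qhat = qhat * (P qhat - th).
Proof. intros Hq Hf. rewrite TS_nonzero by lra. lra. Qed.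

Lemma le_of_strictly_decreasing P a b :
  (forall x y, 0 <= x -> x < y -> P y < P x) -> 0 <= a <= b -> P b <= P a.
Proof. intros Hd H. destruct (Req_dec a b) as [->|]; [lra|]. left; apply Hd; lra. Qed.

Lemma qe_inverse P thh qbar th :
  (forall x, continuity_pt P x) -> 0 < qbar -> P qbar = 0 ->
  (forall x y, 0 <= x -> x < y -> P y < P x) ->
  (exists q0, 0 <= q0 /\ P q0 = thh) -> 0 < th <= thh ->
  0 <= qe P th /\ P (qe P th) = th.
Proof.
  intros Hc Hq HPq Hd [q0 [Hq0 HP0]] Hth.
  unfold qe; apply epsilon_spec.
  assert (HP0th : th <= P 0).
  { pose proof (le_of_strictly_decreasing P 0 q0 Hd ltac:(lra)). lra. }
  assert (Hcont : continuity (fun z => th - P z)).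
  { intros z. apply continuity_pt_minus; [apply continuity_pt_const; intros ? ?; reflexivity|apply Hc]. }
  destruct (Req_dec (P 0) th) as [E|E]; [exists 0; split; [lra|exact E]|].
  destruct (IVT (fun z => th - P z) 0 qbar Hcont Hq) as [z [Hz Hfz]]; [lra|lra|].
  exists z; split; lra.
Qed.

Lemma TS_monotone P c th a b :
  (forall x, continuity_pt P x) -> 0 < a <= b ->
  (forall z, a <= z <= b -> th <= P z) -> TS P c th a <= TS P c th b.
Proof.
  intros Hc Hab Hz. rewrite !TS_nonzero by lra. unfold V.
  assert (Hex : forall s t, ex_RInt P s t).
  { intros s t; apply (@ex_RInt_continuous R_CompleteNormedModule).
    intros z _; apply continuity_pt_filterlim; apply Hc. }
  rewrite <- (RInt_Chasles P 0 a b) by apply Hex.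
  assert (th * (b - a) <= RInt P a b).
  { replace (th * (b - a)) with (RInt (fun _ => th) a b)
      by (rewrite RInt_const; unfold scal; simpl; unfold mult; simpl; ring).
    apply RInt_le; [lra|apply ex_RInt_const|apply Hex|].
    intros z Hz'; apply Hz; lra. }
  unfold plus; simpl. lra.
Qed.

(* The surplus of a floor-randomized mechanism as a function of its expected
   allocation: below [qhat] it is a lottery over [0] and [qhat]. *)
Definition floor_surplus (P : R -> R) (c qhat th x : R) : R :=
  if Rle_dec x qhat then x / qhat * TS P c th qhat else TS P c th x.

Lemma floor_surplus_monotone P c qhat th x y e :
  (forall z, continuity_pt P z) -> 0 < qhat -> V P qhat - qhat * P qhat = c ->
  0 <= x <= y -> y <= e -> qhat <= e -> (forall z, 0 <= z <= e -> th <= P z) ->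
  floor_surplus P c qhat th x <= floor_surplus P c qhat th y.
Proof.
  intros Hc Hq Hf Hxy Hye Hqe Hz.
  assert (HT : 0 <= TS P c th qhat).
  { rewrite TS_at_floor by assumption. pose proof (Hz qhat ltac:(lra)). nra. }
  assert (Hfrac : forall v, 0 <= v <= y -> v / qhat <= y / qhat).
  { intros v Hv. apply Rmult_le_compat_r; [left; apply Rinv_0_lt_compat|]; lra. }
  unfold floor_surplus.
  destruct (Rle_dec x qhat), (Rle_dec y qhat); try lra.
  - apply Rmult_le_compat_r; [assumption|apply Hfrac; lra].
  - assert (x / qhat <= 1).
    { apply (Rmult_le_reg_r qhat); [lra|]. field_simplify; lra. }
    assert (TS P c th qhat <= TS P c th y).
    { apply TS_monotone; [assumption|lra|]. intros z Hz'; apply Hz; lra. }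
    nra.
  - apply TS_monotone; [assumption|lra|]. intros z Hz'; apply Hz; lra.
Qed.

Lemma floor_randomized_cases thl thh qbar qhat r q u th :
  floor_randomized thl thh qbar qhat r q u -> InTheta thl thh th ->
  (q th >= qhat /\ r th = 1) \/ (q th = qhat /\ 0 < r th < 1) \/ (q th = 0 /\ r th = 0).
Proof.
  intros (_ & _ & _ & _ & T1 & T01 & T0 & _ & _ & _ & Hpart & _ & _ & _ & _ & _ & H1 & H01 & H0) Hth.
  destruct (proj2 (Hpart th) Hth) as [h|[h|h]]; auto.
Qed.

Lemma floor_randomized_surplus thl thh qbar qhat P c r q u th :
  0 < qhat -> floor_randomized thl thh qbar qhat r q u -> InTheta thl thh th ->
  r th * TS P c th (q th) = floor_surplus P c qhat th (q th * r th).
Proof.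
  intros Hq HM Hth. unfold floor_surplus.
  destruct (floor_randomized_cases _ _ _ _ _ _ _ _ HM Hth)
    as [[Hqq Hr]|[[Hqq Hr]|[Hqq Hr]]].
  - rewrite Hr, Rmult_1_r. destruct (Rle_dec (q th) qhat); [|ring].
    replace (q th) with qhat by lra. field. lra.
  - rewrite Hqq. destruct (Rle_dec (qhat * r th) qhat); [field; lra|nra].
  - rewrite Hqq, Hr, TS_zero. destruct (Rle_dec (0 * 0) qhat); [field; lra|lra].
Qed.

Lemma IC_utility_increment thl thh r q u s t :
  IC thl thh r q u -> InTheta thl thh s -> InTheta thl thh t ->
  (t - s) * (q t * r t) <= u s - u t <= (t - s) * (q s * r s).
Proof.
  intros H Hs Ht. pose proof (H s t Hs Ht). pose proof (H t s Ht Hs). split; nra.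
Qed.

Lemma mechanism_allocation_bounds thl thh qbar r q u th :
  is_mechanism thl thh qbar r q u -> InTheta thl thh th -> 0 <= q th * r th <= qbar.
Proof. intros H Hth. destruct (H th Hth) as [Hr [Hq _]]. split; nra. Qed.

(* DD keeps every type above [thl = P qhat] strictly below the floor. *)
Lemma excluded_above_floor_type thl thh qbar qhat P r q u th :
  (forall x y, 0 <= x -> x < y -> P y < P x) -> 0 <= qhat ->
  floor_randomized thl thh qbar qhat r q u -> DD thl thh P q ->
  P qhat = thl -> 0 <= qe P th -> P (qe P th) = th ->
  InTheta thl thh th -> thl < th ->
  q th = 0 /\ r th = 0 /\ u th = 0.
Proof.
  intros Hd Hq0 HM HDD HPq He HPe Hth Hlt.
  assert (Hbelow : qe P th < qhat).
  { apply Rnot_le_lt; intros Hn.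
    pose proof (le_of_strictly_decreasing P qhat (qe P th) Hd ltac:(lra)). lra. }
  pose proof (proj1 HDD th Hth).
  assert (Hx : q th = 0 /\ r th = 0).
  { destruct (floor_randomized_cases _ _ _ _ _ _ _ _ HM Hth) as [[]|[[]|[]]]; auto; lra. }
  destruct HM as (_ & Hic & Hir & Huh & _).
  assert (Hh : InTheta thl thh thh) by (unfold InTheta in *; lra).
  pose proof (IC_utility_increment _ _ _ _ _ th thh Hic Hth Hh).
  pose proof (Hir th Hth). destruct Hx as [Hq Hr]. rewrite Hq, Hr in *.
  repeat split; lra.
Qed.

Section Dominance.

Variables (thl thh qbar c alpha qhat : R) (P : R -> R).
Variables (r q u rt qt ut : R -> R).

Hypothesis Hth : thl < thh.
Hypothesis Hqbar : 0 < qbar.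
Hypothesis HPcont : forall x, continuity_pt P x.
Hypothesis HPdec : forall x y, 0 <= x -> x < y -> P y < P x.
Hypothesis Hqhat : 0 < qhat.
Hypothesis Hfloor : V P qhat - qhat * P qhat = c.
Hypothesis Hqe : forall th, InTheta thl thh th -> 0 <= qe P th /\ P (qe P th) = th.
Hypothesis Halpha : alpha < 1.
Hypothesis HM : floor_randomized thl thh qbar qhat r q u.
Hypothesis HMt : floor_randomized thl thh qbar qhat rt qt ut.
Hypothesis HMdd : DD thl thh P q.
Hypothesis HMtdd : DD thl thh P qt.
Hypothesis Hdom : dominates thl thh qbar P c alpha rt qt ut r q u.

Lemma surplus_le_of_allocation_le th :
  InTheta thl thh th -> qt th * rt th <= q th * r th ->
  rt th * TS P c th (qt th) <= r th * TS P c th (q th).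
Proof.
  intros Ht Hle.
  rewrite (floor_randomized_surplus _ _ _ _ _ _ rt qt ut th Hqhat HMt Ht).
  rewrite (floor_randomized_surplus _ _ _ _ _ _ r q u th Hqhat HM Ht).
  pose proof (mechanism_allocation_bounds _ _ _ _ _ _ _ (proj1 HMt) Ht).
  destruct (proj1 HM th Ht) as [Hr [Hq _]].
  destruct (Hqe th Ht) as [He HPe].
  pose proof (proj1 HMdd th Ht) as Hqeff.
  destruct (floor_randomized_cases _ _ _ _ _ _ _ _ HM Ht) as [[Hqq _]|[[Hqq _]|[Hqq Hrr]]].
  3: { rewrite Hqq, Hrr in *. replace (qt th * rt th) with (0 * 0) by lra. lra. }
  all: apply (floor_surplus_monotone _ _ _ _ _ _ (qe P th)); try assumption; try nra.
  all: intros z Hz; rewrite <- HPe; apply le_of_strictly_decreasing; auto.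
Qed.

Lemma utility_gap_nonpos_of_surplus_le th :
  InTheta thl thh th ->
  rt th * TS P c th (qt th) <= r th * TS P c th (q th) -> ut th - u th <= 0.
Proof.
  intros Ht Hle. destruct Hdom as (_ & _ & _ & _ & _ & _ & Hge & _).
  specialize (Hge th Ht). unfold RS in Hge.
  apply Rnot_lt_le; intros Hn.
  assert (0 < (1 - alpha) * (ut th - u th)) by (apply Rmult_lt_0_compat; lra).
  lra.
Qed.

Lemma utility_gap_decrement s t :
  InTheta thl thh s -> InTheta thl thh t ->
  (ut s - u s) - (ut t - u t) >= (t - s) * (qt t * rt t - q s * r s).
Proof.
  intros Hs Ht.
  pose proof (IC_utility_increment _ _ _ _ _ s t (proj1 (proj2 HMt)) Hs Ht).
  pose proof (IC_utility_increment _ _ _ _ _ s t (proj1 (proj2 HM)) Hs Ht).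
  nra.
Qed.

Lemma floor_at_lowest_type :
  q thl * r thl < qt thl * rt thl -> qe P thl = qhat.
Proof.
  intros Hlt.
  assert (Hl : InTheta thl thh thl) by (unfold InTheta; lra).
  destruct (proj1 HMt thl Hl) as [Hrt _].
  pose proof (proj2 HMdd) as Hq. pose proof (proj2 HMtdd) as Hqt.
  destruct (Hqe thl Hl) as [He _].
  destruct (floor_randomized_cases _ _ _ _ _ _ _ _ HM Hl) as [[_ Hr]|[[Hq' _]|[Hq' Hr]]].
  - rewrite Hr, Hq, Hqt in Hlt. nra.
  - lra.
  - rewrite Hq' in Hq. rewrite Hqt, <- Hq, Hr in Hlt. lra.
Qed.

Lemma utility_gap_neg_at_lowest :
  q thl * r thl < qt thl * rt thl -> ut thl - u thl < 0.
Proof.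
  intros Hlt.
  assert (Hl : InTheta thl thh thl) by (unfold InTheta; lra).
  pose proof (floor_at_lowest_type Hlt) as Heq.
  assert (HPq : P qhat = thl) by (rewrite <- Heq; apply (Hqe thl Hl)).
  assert (HTS : TS P c thl qhat = 0).
  { rewrite TS_at_floor, HPq by assumption. ring. }
  assert (Hnull : forall r' q' u', floor_randomized thl thh qbar qhat r' q' u' ->
            DD thl thh P q' -> forall t, InTheta thl thh t -> thl < t ->
            RS P c alpha r' q' u' t = 0).
  { intros r' q' u' HF HDD t Ht Htl. destruct (Hqe t Ht).
    destruct (excluded_above_floor_type thl thh qbar qhat P r' q' u' t HPdec ltac:(lra) HF HDD HPq)
      as (Hq' & Hr' & Hu'); auto.
    unfold RS. rewrite Hq', Hr', Hu', TS_zero. ring. }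
  destruct Hdom as (_ & _ & _ & _ & _ & _ & _ & t & Ht & Hstrict).
  destruct (Rle_lt_or_eq_dec thl t (proj1 Ht)) as [Htl|<-].
  - rewrite (Hnull _ _ _ HM HMdd t Ht Htl), (Hnull _ _ _ HMt HMtdd t Ht Htl) in Hstrict. lra.
  - unfold RS in Hstrict.
    rewrite (proj2 HMdd), (proj2 HMtdd), Heq, HTS in Hstrict. nra.
Qed.

Lemma utility_gap_nonpos th : InTheta thl thh th -> ut th - u th <= 0.
Proof.
  intros Ht.
  assert (Hin : forall t, thl <= t <= th -> InTheta thl thh t) by (unfold InTheta in *; intros; lra).
  assert (Hxt_le : forall t, thl <= t <= th -> 0 < ut t - u t -> q t * r t <= qt t * rt t).
  { intros t Hrange Hpos. apply Rnot_lt_le; intros Hlt.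
    pose proof (utility_gap_nonpos_of_surplus_le t (Hin t Hrange)
                  (surplus_le_of_allocation_le t (Hin t Hrange) (Rlt_le _ _ Hlt))). lra. }
  apply (real_induction_nonpos (fun t => ut t - u t) thl th qbar).
  - apply Ht.
  - exact Hqbar.
  - destruct (Rle_lt_dec (qt thl * rt thl) (q thl * r thl)) as [Hle|Hlt].
    + apply utility_gap_nonpos_of_surplus_le; [unfold InTheta; lra|].
      apply surplus_le_of_allocation_le; [unfold InTheta; lra|assumption].
    + pose proof (utility_gap_neg_at_lowest Hlt). lra.
  - intros w a Hw Hwa Ha.
    pose proof (IC_utility_increment _ _ _ _ _ w a (proj1 (proj2 HMt)) (Hin w ltac:(lra)) (Hin a ltac:(lra))).
    pose proof (IC_utility_increment _ _ _ _ _ w a (proj1 (proj2 HM)) (Hin w ltac:(lra)) (Hin a ltac:(lra))).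
    pose proof (mechanism_allocation_bounds _ _ _ _ _ _ _ (proj1 HMt) (Hin a ltac:(lra))).
    pose proof (mechanism_allocation_bounds _ _ _ _ _ _ _ (proj1 HM) (Hin w ltac:(lra))).
    nra.
  - intros a Ha Hat Hpos.
    apply endpoint_le_of_decrement_bound
      with (d := fun t => ut t - u t) (x := fun t => q t * r t) (K := qbar).
    + intros s t Hs Hst Htb.
      pose proof (utility_gap_decrement s t (Hin s ltac:(lra)) (Hin t ltac:(lra))).
      pose proof (Hxt_le t ltac:(lra) (Hpos t ltac:(lra))).
      nra.
    + lra.
    + intros t Hrange. apply (mechanism_allocation_bounds _ _ _ _ _ _ _ (proj1 HM)), Hin; lra.
Qed.

Hypothesis HMlc : left_continuous thl thh r q.

Lemma utility_gap_neg_above_lowest th :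
  thl < th <= thh -> q th * r th < qt th * rt th -> ut th - u th < 0.
Proof.
  intros Hrange Hlt.
  assert (Ht : InTheta thl thh th) by (unfold InTheta; lra).
  destruct (HMlc th Hrange (qt th * rt th - q th * r th) ltac:(lra)) as [delta [Hdel Hlc]].
  set (t := Rmax thl (th - delta / 2)).
  assert (Hlow : thl <= t) by apply Rmax_l.
  assert (Hnear : th - delta / 2 <= t) by apply Rmax_r.
  assert (Hbelow : t < th) by (unfold t; apply Rmax_lub_lt; lra).
  assert (Htt : InTheta thl thh t) by (unfold InTheta; lra).
  specialize (Hlc t Hlow ltac:(lra)). apply Rabs_def2 in Hlc.
  pose proof (utility_gap_decrement t th Htt Ht).
  pose proof (utility_gap_nonpos t Htt).
  assert (0 < (th - t) * (qt th * rt th - q t * r t)) by (apply Rmult_lt_0_compat; lra).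
  lra.
Qed.

End Dominance.

Theorem lemma8
  (thl thh c qbar : R) (P : R -> R) (qhat alpha : R)
  (rr qq uu rt qt ut : R -> R)
  (Hth : 0 < thl < thh) (Hc : 0 < c)
  (HPcont : forall x, continuity_pt P x)
  (HPdec : forall x y, 0 <= x -> x < y -> P y < P x)
  (Hqbar : 0 < qbar) (HPqbar : P qbar = 0)
  (HA2 : exists q0, 0 <= q0 /\ P q0 = thh /\ TS P c thh q0 > 0)
  (Hqhat : 0 < qhat /\ V P qhat - qhat * P qhat = c)
  (Halpha : 0 <= alpha < 1)
  (HM : floor_randomized thl thh qbar qhat rr qq uu)
  (HMt : floor_randomized thl thh qbar qhat rt qt ut)
  (HMlc : left_continuous thl thh rr qq)
  (HMtlc : left_continuous thl thh rt qt)
  (HMdd : DD thl thh P qq)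
  (HMtdd : DD thl thh P qt)
  (Hdom : dominates thl thh qbar P c alpha rt qt ut rr qq uu) :
  forall th, InTheta thl thh th ->
    qt th * rt th > qq th * rr th -> uu th > ut th.
Proof.
  intros th Ht HD.
  destruct Hqhat as [Hqhat Hfloor].
  assert (Hqe : forall t, InTheta thl thh t -> 0 <= qe P t /\ P (qe P t) = t).
  { intros t Ht'. destruct HA2 as [q0 [Hq0 [HPq0 _]]].
    apply (qe_inverse P thh qbar); eauto. unfold InTheta in Ht'; lra. }
  assert (Hlt : thl < thh) by lra. assert (Halpha1 : alpha < 1) by lra.
  destruct (Rle_lt_or_eq_dec thl th (proj1 Ht)) as [Habove|<-].
  - pose proof (utility_gap_neg_above_lowest thl thh qbar c alpha qhat P rr qq uu rt qt ut
      Hlt Hqbar HPcont HPdec Hqhat Hfloor Hqe Halpha1 HM HMt HMdd HMtdd Hdom HMlc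
      th ltac:(unfold InTheta in Ht; lra) HD).
    lra.
  - pose proof (utility_gap_neg_at_lowest thl thh qbar c alpha qhat P rr qq uu rt qt ut
      Hlt HPdec Hqhat Hfloor Hqe Halpha1 HM HMt HMdd HMtdd Hdom HD).
    lra.
Qed.
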